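(* Let $\operatorname{P}\in\operatorname{MM}(A,\theta,S)$ and suppose $\theta_i$ is varied to $\tilde\theta_i\in(0,1)$, where $i\in S_j$. Then: (i) for a generic $\tilde\theta_i$-covariation scheme $\sigma$ with image parameter $\tilde\theta$, $$\mathcal{D}_{\operatorname{CD}}(\sigma(\operatorname{P}),\operatorname{P})=\log\max_{y\in\mathbb{Y}_{S_j}^{\neq}}\prod_{l\in S_j}\Big(\frac{\tilde\theta_l}{\theta_l}\Big)^{A_{y,l}}-\log\min_{y\in\mathbb{Y}_{S_j}^{\neq}}\prod_{l\in S_j}\Big(\frac{\tilde\theta_l}{\theta_l}\Big)^{A_{y,l}};$$ (ii) for proportional covariation, $$\mathcal{D}_{\operatorname{CD}}(\sigma_{\operatorname{pro}}(\operatorname{P}),\operatorname{P})=\log\max_{y\in\mathbb{Y}_{S_j}^{\neq}}\Big(\frac{\tilde\theta_i}{\theta_i}\Big)^{A_{y,i}}\Big(\frac{1-\tilde\theta_i}{1-\theta_i}\Big)^{|A_{y,S_j^{-i}}|}-\log\min_{y\in\mathbb{Y}_{S_j}^{\neq}}\Big(\frac{\tilde\theta_i}{\theta_i}\Big)^{A_{y,i}}\Big(\frac{1-\tilde\theta_i}{1-\theta_i}\Big)^{|A_{y,S_j^{-i}}|};$$ (iii) for uniform covariation, $$\mathcal{D}_{\operatorname{CD}}(\sigma_{\operatorname{uni}}(\operatorname{P}),\operatorname{P})=\log\max_{y\in\mathbb{Y}_{S_j}^{\neq}}\frac{\tilde\theta_i^{A_{y,i}}\big(\frac{1-\tilde\theta_i}{\#S_j-1}\big)^{|A_{y,S_j^{-i}}|}}{\prod_{l\in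 S_j}\theta_l^{A_{y,l}}}-\log\min_{y\in\mathbb{Y}_{S_j}^{\neq}}\frac{\tilde\theta_i^{A_{y,i}}\big(\frac{1-\tilde\theta_i}{\#S_j-1}\big)^{|A_{y,S_j^{-i}}|}}{\prod_{l\in S_j}\theta_l^{A_{y,l}}};$$ (iv) for linear covariation with coefficients $\gamma_k,\delta_k$, $$\mathcal{D}_{\operatorname{CD}}(\sigma_{\operatorname{lin}}(\operatorname{P}),\operatorname{P})=\log\max_{y\in\mathbb{Y}_{S_j}^{\neq}}\Big(\frac{\tilde\theta_i}{\theta_i}\Big)^{A_{y,i}}\prod_{k\in S_j^{-i}}\Big(\frac{\gamma_k\tilde\theta_i+\delta_k}{\theta_k}\Big)^{A_{y,k}}-\log\min_{y\in\mathbb{Y}_{S_j}^{\neq}}\Big(\frac{\tilde\theta_i}{\theta_i}\Big)^{A_{y,i}}\prod_{k\in S_j^{-i}}\Big(\frac{\gamma_k\tilde\theta_i+\delta_k}{\theta_k}\Big)^{A_{y,k}}.$$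
   Context: Let $\mathbb{Y}$ be a finite set with $q$ elements. A monomial model $\operatorname{MM}(A,\theta,S)$ is given by $A\in\mathcal{M}_{q\times k}(\mathbb{Z}_{\ge0})$ with rows $A_y$, $y\in\mathbb{Y}$, parameters $\theta\in\mathbb{R}^k_{>0}$, and a partition $S=\{S_1,\dots,S_n\}$ of $[k]$ with each block $(\theta_l)_{l\in S_m}$ in the open probability simplex; $\operatorname{P}(y)=\prod_l\theta_l^{A_{y,l}}$, which is a probability distribution on $\mathbb{Y}$ for every such parameter. Notation: $S_j^{-i}=S_j\setminus\{i\}$, $|A_{y,H}|=\sum_{l\in H}A_{y,l}$; for $\emptyset\ne H\subset[k]$, $\mathbb{Y}_H^{=}=\{y\in\mathbb{Y}: A_{y,l}=0\text{ for all }l\in H\}$ and $\mathbb{Y}_H^{\neq}=\mathbb{Y}\setminus\mathbb{Y}_H^{=}$. A $\tilde\theta_i$-covariation scheme $\sigma$ ($i\in S_j$) maps $\theta$ to $\tilde\theta$ with $\tilde\theta_i$ given, $\tilde\theta_l=\theta_l$ for $l\notin S_j$, and $(\tilde\theta_l)_{l\in S_j}$ in the open simplex; $\sigma(\operatorname{P})(y)=\tilde\theta^{A_y}$. Proportional: $\tilde\theta_k=\frac{1-\tilde\theta_i}{1-\theta_i}\theta_k$; uniform: $\tilde\theta_k=\frac{1-\tilde\theta_i}{\#S_j-1}$; linear: $\tilde\theta_k=\gamma_k\tilde\theta_i+\delta_k$, constants chosen so the block sums to one ($k\in S_j^{-i}$). The CD distance between distributions $\tilde{\operatorname{P}},\operatorname{P}$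 on $\mathbb{Y}$ is $\mathcal{D}_{\operatorname{CD}}(\tilde{\operatorname{P}},\operatorname{P})=\log\max_{y}\frac{\tilde{\operatorname{P}}(y)}{\operatorname{P}(y)}-\log\min_y\frac{\tilde{\operatorname{P}}(y)}{\operatorname{P}(y)}$. *)

From HB Require Import structures.
From mathcomp Require Import all_boot all_order all_algebra.
From mathcomp Require Import reals exp.
Set Implicit Arguments. Unset Strict Implicit. Unset Printing Implicit Defensive.
Import Order.TTheory GRing.Theory Num.Theory.
Local Open Scope ring_scope.

Section MonomialModels.
Variable R : realType.

(* maximum / minimum of f over a finite set Y (0 by convention if Y empty) *)
Definition setmax (T : finType) (Y : {set T}) (f : T -> R) : R :=
  if [pick y in Y] is Some y0 then \big[Num.max/f y0]_(y in Y) f y else 0.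
Definition setmin (T : finType) (Y : {set T}) (f : T -> R) : R :=
  if [pick y in Y] is Some y0 then \big[Num.min/f y0]_(y in Y) f y else 0.

Definition CD_dist (Y : finType) (Pt P : Y -> R) : R :=
  ln (setmax [set: Y] (fun y => Pt y / P y)) -
  ln (setmin [set: Y] (fun y => Pt y / P y)).

(* Partition S = {S_1,...,S_n} of [k] encoded by a block map blk : 'I_k -> 'I_n,
   S_m = [set l | blk l == m]. *)
Definition block (k n : nat) (blk : 'I_k -> 'I_n) (m : 'I_n) : {set 'I_k} :=
  [set l | blk l == m].

Definition is_partition (k n : nat) (blk : 'I_k -> 'I_n) : Prop :=
  forall m : 'I_n, exists l : 'I_k, blk l = m.

Definition valid_param (k n : nat) (blk : 'I_k -> 'I_n) (th : 'I_k -> R) : Prop :=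
  (forall l, 0 < th l) /\ (forall m : 'I_n, \sum_(l in block blk m) th l = 1).

Definition mono_dist (Y : finType) (k : nat) (A : Y -> 'I_k -> nat)
  (th : 'I_k -> R) (y : Y) : R := \prod_(l < k) th l ^+ A y l.

Definition is_monomial_model (Y : finType) (k n : nat) (A : Y -> 'I_k -> nat)
  (blk : 'I_k -> 'I_n) : Prop :=
  is_partition blk /\
  forall th, valid_param blk th -> \sum_(y : Y) mono_dist A th y = 1.

Definition Yneq (Y : finType) (k : nat) (A : Y -> 'I_k -> nat) (H : {set 'I_k})
  : {set Y} := [set y | [exists l in H, A y l != 0%N]].

Definition cov_image (k n : nat) (blk : 'I_k -> 'I_n) (th tht : 'I_k -> R)
  (i : 'I_k) (tti : R) : Prop :=
  [/\ tht i = tti,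
      (forall l, blk l != blk i -> tht l = th l),
      (forall l, blk l == blk i -> 0 < tht l) &
      \sum_(l in block blk (blk i)) tht l = 1].

Definition th_pro (k n : nat) (blk : 'I_k -> 'I_n) (th : 'I_k -> R) (i : 'I_k)
  (tti : R) : 'I_k -> R :=
  fun l => if l == i then tti
           else if blk l == blk i then (1 - tti) / (1 - th i) * th l else th l.
Definition th_uni (k n : nat) (blk : 'I_k -> 'I_n) (th : 'I_k -> R) (i : 'I_k)
  (tti : R) : 'I_k -> R :=
  fun l => if l == i then tti
           else if blk l == blk i then (1 - tti) / (#|block blk (blk i)|.-1)%:R
           else th l.
Definition th_lin (k n : nat) (blk : 'I_k -> 'I_n) (th : 'I_k -> R) (i : 'I_k)
  (tti : R) (gam del : 'I_k -> R) : 'I_k -> R :=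
  fun l => if l == i then tti
           else if blk l == blk i then gam l * tti + del l else th l.

End MonomialModels.

(** The ratio [P~ y / P y] of the perturbed to the original monomial
    distribution is the product of [(θ~_l / θ_l) ^ A_{y,l}] over the block
    [S_j], which is [1] at every [y] outside [Y_{S_j}^≠].  Since both [P] and
    [P~] sum to one, the [P]-weighted mean of the ratio is [1], so on
    [Y_{S_j}^≠] the ratio takes a value [>= 1] and a value [<= 1]; hence
    adding the points where it equals [1] changes neither its maximum nor its
    minimum.  The four formulas are this single identity with the product
    evaluated for the respective schemes. *)
From HB Require Import structures.
From mathcomp Require Import all_boot all_order all_algebra.
From mathcomp Require Import reals exp.
Set Implicit Arguments. Unset Strict Implicit. Unset Printing Implicit Defensive.
Import Order.TTheory GRing.Theory Num.Theory.
Local Open Scope ring_scope.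

Section SetExtrema.
Variables (R : realType) (T : finType).
Implicit Types (S U : {set T}) (f g : T -> R).

Lemma setmax_at S f y0 :
  y0 \in S -> (forall y, y \in S -> f y <= f y0) -> setmax S f = f y0.
Proof.
move=> Sy0 ub; rewrite /setmax; case: pickP => [y1 Sy1|S0]; last first.
  by rewrite S0 in Sy0.
apply: le_anti; rewrite bigmax_le ?ub //=.
exact: (bigmax_sup y0).
Qed.

Lemma setmin_at S f y0 :
  y0 \in S -> (forall y, y \in S -> f y0 <= f y) -> setmin S f = f y0.
Proof.
move=> Sy0 lb; rewrite /setmin; case: pickP => [y1 Sy1|S0]; last first.
  by rewrite S0 in Sy0.
apply: le_anti; rewrite le_bigmin ?lb ?andbT //=.
exact: (bigmin_inf y0).
Qed.

Lemma eq_setmax S f g : {in S, f =1 g} -> setmax S f = setmax S g.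
Proof.
move=> fg; rewrite /setmax; case: pickP => // y1 Sy1.
by rewrite fg //; apply: eq_bigr => y Sy; rewrite fg.
Qed.

Lemma eq_setmin S f g : {in S, f =1 g} -> setmin S f = setmin S g.
Proof.
move=> fg; rewrite /setmin; case: pickP => // y1 Sy1.
by rewrite fg //; apply: eq_bigr => y Sy; rewrite fg.
Qed.

Lemma setmax_setmin_cst S f c : {in S, forall y, f y = c} -> setmax S f = setmin S f.
Proof.
move=> fc; rewrite /setmax /setmin; case: pickP => // y1 Sy1.
by rewrite bigmax_eq_id ?bigmin_eq_id // => y Sy; rewrite !fc.
Qed.

Lemma setmax_dominated S U f y0 :
  S \subset U -> y0 \in S ->
  (forall y, y \in U -> exists2 z, z \in S & f y <= f z) ->
  setmax U f = setmax S f.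
Proof.
move=> /subsetP sSU Sy0 dom.
have [y1 Sy1 max_y1] := @arg_maxP _ R T y0 (mem S) f Sy0.
rewrite (setmax_at Sy1 max_y1) (setmax_at (sSU _ Sy1)) // => y Uy.
by have [z Sz /le_trans->] := dom y Uy; last exact: max_y1.
Qed.

Lemma setmin_dominated S U f y0 :
  S \subset U -> y0 \in S ->
  (forall y, y \in U -> exists2 z, z \in S & f z <= f y) ->
  setmin U f = setmin S f.
Proof.
move=> /subsetP sSU Sy0 dom.
have [y1 Sy1 min_y1] := @arg_minP _ R T y0 (mem S) f Sy0.
rewrite (setmin_at Sy1 min_y1) (setmin_at (sSU _ Sy1)) // => y Uy.
by have [z Sz] := dom y Uy; apply: le_trans; apply: min_y1.
Qed.

Lemma weighted_sum0_has_ge0 S (w h : T -> R) y0 :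
  {in S, forall y, 0 < w y} -> \sum_(y in S) w y * h y = 0 -> y0 \in S ->
  exists2 y, y \in S & 0 <= h y.
Proof.
move=> w_gt0 sum0 Sy0.
have [/exists_inP //|/exists_inPn h_lt0] := boolP [exists y in S, 0 <= h y].
have nw_ge0 y : y \in S -> 0 <= w y * - h y.
  move=> Sy; apply: mulr_ge0; apply: ltW; first exact: w_gt0.
  by rewrite oppr_gt0 ltNge h_lt0.
have sumN0 : \sum_(y in S) w y * - h y = 0.
  by under eq_bigr do rewrite mulrN; rewrite sumrN sum0 oppr0.
have /eqP := psumr_eq0P nw_ge0 sumN0 Sy0.
by rewrite mulf_eq0 oppr_eq0 gt_eqF ?w_gt0 //= lt_eqF // ltNge h_lt0.
Qed.

End SetExtrema.

Lemma CD_dist_on_support (R : realType) (Y : finType) (S : {set Y}) (Pt P : Y -> R) :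
  (forall y, 0 < P y) -> \sum_y Pt y = \sum_y P y ->
  {in ~: S, Pt =1 P} ->
  CD_dist Pt P
    = ln (setmax S (fun y => Pt y / P y)) - ln (setmin S (fun y => Pt y / P y)).
Proof.
move=> P_gt0 sumPt PtP; rewrite /CD_dist; set g := fun y => Pt y / P y.
have g1 y : y \notin S -> g y = 1.
  by move=> Sy; rewrite /g PtP ?inE // divff // gt_eqF.
have [S0|[y0 Sy0]] := set_0Vmem S.
  (* The ratio is constantly 1, and setmax/setmin of the empty set are both 0. *)
  have {}g1 y : g y = 1 by rewrite g1 // S0 inE.
  by rewrite !(@setmax_setmin_cst _ _ _ g 1) ?subrr.
have sum0 : \sum_(y in S) P y * (g y - 1) = 0.
  have -> : \sum_(y in S) P y * (g y - 1) = \sum_y (Pt y - P y).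
    rewrite [RHS](bigID (mem S)) /= [X in _ + X]big1 ?addr0 => [|y Sy].
      by apply: eq_bigr => y _; rewrite mulrBr mulr1 mulrC divfK ?gt_eqF.
    by rewrite PtP ?inE ?subrr.
  by rewrite sumrB sumPt subrr.
have [ya Sya ga] := weighted_sum0_has_ge0 (fun y _ => P_gt0 y) sum0 Sy0.
have [yb Syb gb] : exists2 y, y \in S & 0 <= - (g y - 1).
  apply: (weighted_sum0_has_ge0 (fun y _ => P_gt0 y) _ Sy0).
  by under eq_bigr do rewrite mulrN; rewrite sumrN sum0 oppr0.
rewrite subr_ge0 in ga; rewrite oppr_ge0 subr_le0 in gb.
rewrite (setmax_dominated (subsetT S) Sy0) ?(setmin_dominated (subsetT S) Sy0) //.
  by move=> y _; have [Sy|/g1->] := boolP (y \in S); [exists y | exists yb].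
by move=> y _; have [Sy|/g1->] := boolP (y \in S); [exists y | exists ya].
Qed.

Section MonomialModel.
Variables (R : realType) (Y : finType) (k n : nat).
Variables (A : Y -> 'I_k -> nat) (blk : 'I_k -> 'I_n).
Implicit Types (th tht g : 'I_k -> R) (S : {set 'I_k}).

Lemma mono_dist_gt0 th y : (forall l, 0 < th l) -> 0 < mono_dist A th y.
Proof. by move=> th_gt0; apply: prodr_gt0 => l _; apply: exprn_gt0. Qed.

Lemma mono_dist_ratio S th tht y :
  (forall l, 0 < th l) -> {in ~: S, tht =1 th} ->
  mono_dist A tht y / mono_dist A th y = \prod_(l in S) (tht l / th l) ^+ A y l.
Proof.
move=> th_gt0 tht_th; rewrite /mono_dist -prodf_div.
under eq_bigr do rewrite -expr_div_n.
rewrite (bigID (mem S)) /= [X in _ * X]big1 ?mulr1 // => l Sl.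
by rewrite tht_th ?inE // divff ?expr1n ?gt_eqF.
Qed.

Lemma mono_dist_notin_Yneq S th tht y :
  {in ~: S, tht =1 th} -> y \notin Yneq A S -> mono_dist A tht y = mono_dist A th y.
Proof.
move=> tht_th; rewrite inE => /exists_inPn A0; apply: eq_bigr => l _.
have [Sl|Sl] := boolP (l \in S); last by rewrite tht_th ?inE.
by move/negPn/eqP: (A0 l Sl) => ->; rewrite !expr0.
Qed.

Section Covariation.
Variables (th : 'I_k -> R) (i : 'I_k) (tti : R).
Let Sj := block blk (blk i).
Let Sj_i : i \in Sj. Proof. by rewrite inE. Qed.

Lemma cov_image_off_block tht : cov_image blk th tht i tti -> {in ~: Sj, tht =1 th}.
Proof. by case=> _ tht_th _ _ l; rewrite !inE; apply: tht_th. Qed.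

Lemma cov_image_valid tht :
  valid_param blk th -> cov_image blk th tht i tti -> valid_param blk tht.
Proof.
move=> [th_gt0 th_sum] [_ tht_th tht_gt0 tht_sum]; split=> [l|m].
  by have [/tht_gt0|/tht_th->] := boolP (blk l == blk i).
have [->//|m_i] := eqVneq m (blk i).
rewrite -(th_sum m); apply: eq_bigr => l; rewrite inE => /eqP blk_l.
by apply: tht_th; rewrite blk_l.
Qed.

Lemma CD_dist_cov_image tht (f : Y -> R) :
  is_monomial_model R A blk -> valid_param blk th -> cov_image blk th tht i tti ->
  (forall y, \prod_(l in Sj) (tht l / th l) ^+ A y l = f y) ->
  CD_dist (mono_dist A tht) (mono_dist A th)
    = ln (setmax (Yneq A Sj) f) - ln (setmin (Yneq A Sj) f).
Proof.
move=> [_ mm_sum1] th_valid tht_cov f_prod.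
have th_gt0 := th_valid.1; have tht_th := cov_image_off_block tht_cov.
rewrite (CD_dist_on_support (S := Yneq A Sj)).
- by congr (ln _ - ln _); [apply: eq_setmax | apply: eq_setmin] => y _;
    rewrite (mono_dist_ratio _ th_gt0 tht_th) f_prod.
- by move=> y; apply: mono_dist_gt0.
- by rewrite !mm_sum1 //; apply: cov_image_valid tht_cov.
- by move=> y; rewrite inE; apply: mono_dist_notin_Yneq.
Qed.

(* [th_pro], [th_uni] and [th_lin] are all convertible to [cov_scheme g]. *)
Definition cov_scheme g l : R :=
  if l == i then tti else if blk l == blk i then g l else th l.

Lemma prod_cov_scheme_ratio g y :
  \prod_(l in Sj) (cov_scheme g l / th l) ^+ A y l
    = (tti / th i) ^+ A y i * \prod_(l in Sj :\ i) (g l / th l) ^+ A y l.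
Proof.
rewrite (big_setD1 i Sj_i) /cov_scheme eqxx; congr (_ * _).
by apply: eq_bigr => l; rewrite !inE => /andP[/negbTE-> ->].
Qed.

Lemma prod_th_pro_ratio y : (forall l, 0 < th l) ->
  \prod_(l in Sj) (th_pro blk th i tti l / th l) ^+ A y l
    = (tti / th i) ^+ A y i * ((1 - tti) / (1 - th i)) ^+ (\sum_(l in Sj :\ i) A y l).
Proof.
move=> th_gt0; rewrite (prod_cov_scheme_ratio (fun l => (1 - tti) / (1 - th i) * th l)).
by rewrite -prodrXr; congr (_ * _); apply: eq_bigr => l _; rewrite mulfK ?gt_eqF.
Qed.

Lemma prod_th_uni_ratio y :
  \prod_(l in Sj) (th_uni blk th i tti l / th l) ^+ A y l
    = tti ^+ A y i * ((1 - tti) / (#|Sj|.-1)%:R) ^+ (\sum_(l in Sj :\ i) A y l)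
      / \prod_(l in Sj) th l ^+ A y l.
Proof.
rewrite (prod_cov_scheme_ratio (fun=> (1 - tti) / (#|Sj|.-1)%:R)).
rewrite [in RHS](big_setD1 i Sj_i) expr_div_n.
by under eq_bigr do rewrite expr_div_n; rewrite prodf_div prodrXr mulf_div.
Qed.

End Covariation.
End MonomialModel.

Theorem theorem2 (R : realType) (Y : finType) (k n : nat)
  (A : Y -> 'I_k -> nat) (blk : 'I_k -> 'I_n) (th : 'I_k -> R)
  (i : 'I_k) (j : 'I_n) (tti : R) :
  is_monomial_model R A blk -> valid_param blk th ->
  blk i = j -> 0 < tti < 1 ->
  let Sj := block blk j in
  let Sji := Sj :\ i in
  let P := mono_dist A th in
  let YS := Yneq A Sj in
  (* (i) generic covariation scheme *)
  (forall tht : 'I_k -> R, cov_image blk th tht i tti ->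
     let f := fun y => \prod_(l in Sj) (tht l / th l) ^+ A y l in
     CD_dist (mono_dist A tht) P = ln (setmax YS f) - ln (setmin YS f)) /\
  (* (ii) proportional covariation *)
  (cov_image blk th (th_pro blk th i tti) i tti ->
     let f := fun y => (tti / th i) ^+ A y i *
                       ((1 - tti) / (1 - th i)) ^+ (\sum_(l in Sji) A y l)%N in
     CD_dist (mono_dist A (th_pro blk th i tti)) P
       = ln (setmax YS f) - ln (setmin YS f)) /\
  (* (iii) uniform covariation *)
  (cov_image blk th (th_uni blk th i tti) i tti ->
     let f := fun y => tti ^+ A y i *
                       ((1 - tti) / (#|Sj|.-1)%:R) ^+ (\sum_(l in Sji) A y l)%N
                       / \prod_(l in Sj) th l ^+ A y l in
     CD_dist (mono_dist A (th_uni blk th i tti)) P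
       = ln (setmax YS f) - ln (setmin YS f)) /\
  (* (iv) linear covariation *)
  (forall gam del : 'I_k -> R,
     cov_image blk th (th_lin blk th i tti gam del) i tti ->
     let f := fun y => (tti / th i) ^+ A y i *
                       \prod_(l in Sji) ((gam l * tti + del l) / th l) ^+ A y l in
     CD_dist (mono_dist A (th_lin blk th i tti gam del)) P
       = ln (setmax YS f) - ln (setmin YS f)).
Proof.
move=> mm th_valid <- _ Sj Sji P YS.
have CD_cov := CD_dist_cov_image mm th_valid.
split; [|split; [|split]].
- by move=> tht cov f; apply: CD_cov cov _.
- by move=> cov f; apply: CD_cov cov _ => y; apply: prod_th_pro_ratio th_valid.1.
- by move=> cov f; apply: CD_cov cov _ => y; apply: prod_th_uni_ratio.
- by move=> gam del cov f; apply: CD_cov cov _ => y; apply: prod_cov_scheme_ratio.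
Qed.
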